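(* Let $\mathcal{F}$ be a space of functions on $\mathbb{R}$, closed under translations, with a translation-invariant norm $\|\cdot\|$. Suppose that $S_N$ admits the weak global Edgeworth expansion of order $0$ on $\mathcal{F}$ with leading polynomial $P_{0,g}\equiv 1$ and asymptotic mean $A=0$, i.e. $\mathbb{E}(g(S_N))=\int\mathfrak{n}(z)g(z\sqrt{N})\,dz+\|g\|\,o(N^{-1/2})$ for all $g\in\mathcal{F}$, with the $o$-term independent of $g$. Let $f\in\mathcal{F}$ be integrable with $|xf(x)|$ integrable. Then $$\sqrt{N}\,\mathbb{E}(f(S_N-u))=\frac{1}{\sqrt{2\pi\sigma^2}}e^{-\frac{u^2}{2N\sigma^2}}\int f(x)\,dx+o(1)$$ uniformly for $u\in\mathbb{R}$.
   Context: $X_1,X_2,\dots$ are real random variables, $S_N=\sum_{n=1}^N X_n$, $\sigma^2>0$ and $\mathfrak{n}(y)=\frac{1}{\sqrt{2\pi\sigma^2}}e^{-y^2/(2\sigma^2)}$. In this subsection the paper assumes the asymptotic mean $A=\lim_{N\to\infty}\mathbb{E}(S_N/N)$ equals $0$. *)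

From HB Require Import structures.
From mathcomp Require Import all_boot all_order all_algebra.
From mathcomp Require Import all_classical all_reals all_analysis.
Set Implicit Arguments. Unset Strict Implicit. Unset Printing Implicit Defensive.
Import Order.TTheory GRing.Theory Num.Theory.
Import numFieldNormedType.Exports.
Local Open Scope ring_scope.

Definition ndens (R : realType) (sigma : R) (y : R) : R :=
  (Num.sqrt (2 * pi * sigma ^+ 2))^-1 * expR (- (y ^+ 2) / (2 * sigma ^+ 2)).

Definition psum (T : Type) (R : realType) (X : nat -> T -> R) (N : nat) : T -> R :=
  fun t => \sum_(1 <= n < N.+1) X n t.

From HB Require Import structures.
From mathcomp Require Import all_boot all_order all_algebra.
From mathcomp Require Import all_classical all_reals all_analysis measurable_realfun.
From mathcomp Require Import ring.
Import Order.TTheory GRing.Theory Num.Theory.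
Import numFieldNormedType.Exports.
Local Open Scope classical_set_scope.
Local Open Scope ring_scope.

(** Apply the expansion to the translate [f (. - u)], which has the same norm.
    The substitution [x = z sqrt N - u] turns [sqrt N * int n(z) f(z sqrt N - u) dz]
    into [int n((x + u) / sqrt N) f(x) dx].  The Gaussian density [n] is Lipschitz
    with constant [c / sigma], where [c = (2 pi sigma^2)^(-1/2)] is its maximum, so
    replacing [n((x + u) / sqrt N)] by [n(u / sqrt N) = c exp(-u^2 / (2 N sigma^2))]
    costs at most [c / (sigma sqrt N) * int |x f(x)| dx], uniformly in [u]. *)

Section affine_change_of_variables.
Context {R : realType} (s u : R).
Hypothesis s_gt0 : 0 < s.
Local Notation mu := (@lebesgue_measure R).
Local Notation aff := (fun z : measurableTypeR R => z * s - u : measurableTypeR R).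

Let measurable_aff : measurable_fun setT aff.
Proof. by apply: measurable_funB => //; exact: measurable_funM. Qed.

Let invs_ge0 : 0 <= s^-1. Proof. by rewrite invr_ge0 ltW. Qed.

Lemma pushforward_lebesgue_affine (A : set R) : measurable A ->
  (pushforward mu aff A = (s^-1)%:E * mu A)%E.
Proof.
move=> mA; suff -> : mu A = mscale (NngNum (ltW s_gt0)) (pushforward mu aff) A.
  by rewrite /mscale/= muleA -EFinM mulVf ?gt_eqF // mul1e.
(* The measure instance of [pushforward mu aff] takes [measurable_aff] as an
   argument that unification cannot find, hence the explicit instantiation. *)
have /(_ measurable_aff) := @lebesgue_measure_unique R
  (mscale (NngNum (ltW s_gt0)) (pushforward mu aff)).
move=> lebesgue_unique; rewrite (lebesgue_unique _ A mA) // => _ [[a b] _ <-] /=.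
rewrite /mscale /pushforward /=.
rewrite [X in (_ * mu X)%E](_ : _ = `](a + u) / s, (b + u) / s]%classic); last first.
  by apply/seteqP; split => z /=; rewrite !in_itv/= ltrBrDr lerBlDr ltr_pdivrMr // ler_pdivlMr.
rewrite !lebesgue_measure_itv/= !lte_fin ltr_pM2r ?invr_gt0 // ltrD2r.
case: ifPn => ab; last by rewrite mule0.
by rewrite -!EFinB -EFinM; congr (_%:E); field; rewrite gt_eqF.
Qed.

Lemma ge0_integral_affine (G : R -> \bar R) :
  measurable_fun setT G -> (forall x, 0 <= G x)%E ->
  (\int[mu]_z G (z * s - u)%R = (s^-1)%:E * \int[mu]_x G x)%E.
Proof.
move=> mG G_ge0.
have := ge0_integral_pushforward measurable_aff mu measurableT mG (fun x _ => G_ge0 x).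
rewrite preimage_setT => <-.
have /(_ measurable_aff) := @eq_measure_integral _ _ R setT
  (mscale (NngNum invs_ge0) mu) (pushforward mu aff) G.
move=> ->; first by rewrite ge0_integral_mscale.
by move=> A mA _; exact: pushforward_lebesgue_affine.
Qed.

Lemma integral_affine (H : R -> R) : mu.-integrable setT (EFin \o H) ->
  (\int[mu]_z (H (z * s - u))%:E = (s^-1)%:E * \int[mu]_x (H x)%:E)%E.
Proof.
move=> intH; have mH := measurable_int _ intH.
rewrite integralE [in RHS]integralE.
have -> : (fun z => (H (z * s - u))%:E) = (EFin \o H) \o aff by [].
rewrite funepos_comp funeneg_comp !ge0_integral_affine //; last 2 first.
- exact: measurable_funeneg.
- exact: measurable_funepos.
rewrite -muleBr // fin_num_adde_defl // fin_numN.
exact: integrable_neg_fin_num.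
Qed.

Lemma Rintegral_affine (H : R -> R) : mu.-integrable setT (EFin \o H) ->
  Rintegral mu setT (fun z => H (z * s - u)) = s^-1 * Rintegral mu setT H.
Proof.
move=> intH; rewrite /Rintegral integral_affine // fineM //.
exact: integrable_fin_num.
Qed.
End affine_change_of_variables.

Lemma ler_dist_derive_bounded {R : realType} (f df : R -> R) (k : R) :
  (forall x : R, is_derive x 1 f (df x)) -> (forall x, `|df x| <= k) ->
  forall a b, `|f b - f a| <= k * `|b - a|.
Proof.
move=> f_df df_le a b; wlog le_ab : a b / a <= b.
  move=> H; have [/H//|/ltW/H] := leP a b.
  by rewrite distrC [`|a - b|]distrC.
have f_cont : {within `[a, b], continuous f}.
  apply/continuous_subspaceT => x.
  by apply/differentiable_continuous/derivable1_diffP; case: (f_df x).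
have [x _ ->] := MVT_segment le_ab (fun x _ => f_df x) f_cont.
by rewrite normrM ler_wpM2r.
Qed.

Section gaussian_density.
Context {R : realType} (sigma : R).
Hypothesis sigma_gt0 : 0 < sigma.
Local Notation c := (Num.sqrt (2 * pi * sigma ^+ 2))^-1.

Let sqrt_gt0 : 0 < Num.sqrt (2 * pi * sigma ^+ 2).
Proof. by rewrite sqrtr_gt0 !mulr_gt0 ?pi_gt0 ?exprn_gt0. Qed.

Lemma is_derive_ndens (x : R) :
  is_derive x 1 (ndens sigma) (- (x / sigma ^+ 2) * ndens sigma x).
Proof.
rewrite /ndens; apply: is_derive_eq.
rewrite scaler0 add0r /GRing.scale/= mulr1.
by field; rewrite !gt_eqF.
Qed.

Lemma normr_mul_expR_gauss_le (y : R) :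
  `|y| * expR (- (y ^+ 2) / (2 * sigma ^+ 2)) <= sigma.
Proof.
set t := y ^+ 2 / (2 * sigma ^+ 2).
have t_ge0 : 0 <= t by rewrite divr_ge0 ?sqr_ge0 // mulr_ge0 ?sqr_ge0.
(* [y ^+ 2 = 2 t sigma ^+ 2 <= sigma ^+ 2 (expR (2 t) - 1)] *)
have y2_le : y ^+ 2 <= (sigma * expR t) ^+ 2.
  rewrite exprMn -expRM_natl.
  apply: le_trans (ler_wpM2l (sqr_ge0 sigma) (expR_ge1Dx _)).
  have -> : sigma ^+ 2 * (1 + 2 * t) = sigma ^+ 2 + y ^+ 2.
    by rewrite /t; field; rewrite gt_eqF // exprn_gt0.
  by rewrite lerDr sqr_ge0.
have y_le : `|y| <= sigma * expR t.
  move: y2_le; rewrite -[y ^+ 2]real_normK ?num_real // ler_sqr //.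
  by rewrite nnegrE mulr_ge0 ?expR_ge0 // ltW.
by rewrite mulNr expRN ler_pdivrMr ?expR_gt0.
Qed.

Lemma ndens_ge0 (y : R) : 0 <= ndens sigma y.
Proof. by rewrite /ndens mulr_ge0 ?expR_ge0 // invr_ge0 sqrtr_ge0. Qed.

Lemma normr_ndens_le (y : R) : `|ndens sigma y| <= c.
Proof.
rewrite ger0_norm ?ndens_ge0 // /ndens ler_piMr ?invr_ge0 ?sqrtr_ge0 // expR_le1.
by rewrite mulNr oppr_le0 divr_ge0 ?sqr_ge0 // mulr_ge0 ?sqr_ge0.
Qed.

Lemma ndens_lipschitz (a b : R) :
  `|ndens sigma b - ndens sigma a| <= c / sigma * `|b - a|.
Proof.
apply: ler_dist_derive_bounded is_derive_ndens _ a b => x.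
have c_ge0 : 0 <= c by rewrite invr_ge0 sqrtr_ge0.
rewrite normrM normrN /ndens [`|c * _|]normrM (ger0_norm c_ge0) ger0_norm ?expR_ge0 //.
rewrite mulrCA; apply: ler_wpM2l => //.
rewrite normrM normfV [`|sigma ^+ 2|]ger0_norm ?sqr_ge0 // mulrAC.
rewrite ler_pdivrMr ?exprn_gt0 // [X in _ <= _ * X]expr2 mulKf ?gt_eqF //.
exact: normr_mul_expR_gauss_le.
Qed.

Lemma measurable_ndens : measurable_fun setT (ndens sigma).
Proof.
apply: measurable_funM => //; apply: measurableT_comp => //.
by apply: measurable_funM => //; exact: measurableT_comp.
Qed.
End gaussian_density.

Section scaled_integral.
Context {R : realType} {phi : R -> R} {L M : R}.
Hypothesis measurable_phi : measurable_fun setT phi.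
Hypothesis phi_bounded : forall y, `|phi y| <= M.
Hypothesis phi_lipschitz : forall a b, `|phi b - phi a| <= L * `|b - a|.
Local Notation mu := (@lebesgue_measure R).

Lemma scaled_integral_first_moment_bound (f : R -> R) (s u : R) : 0 < s ->
  mu.-integrable setT (EFin \o f) ->
  mu.-integrable setT (EFin \o (fun x => x * f x)) ->
  `|s * \int[mu]_(z in setT) (phi z * f (z * s - u))
    - phi (u / s) * \int[mu]_(x in setT) f x|
  <= L / s * \int[mu]_(x in setT) `|x * f x|.
Proof.
move=> s_gt0 intf intxf.
pose H x := phi ((x + u) / s) * f x.
have intH : mu.-integrable setT (EFin \o H).
  have mphi_s : measurable_fun (setT : set (measurableTypeR R))
      (fun x => phi ((x + u) / s)).
    apply: measurableT_comp => //.
    by apply: measurable_funM => //; exact: measurable_funD.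
  have phi_s_bounded : [bounded phi ((x + u) / s) | x in setT].
    exists M; split => [|K MK x _]; first exact: num_real.
    exact: le_trans (phi_bounded _) (ltW MK).
  apply: (eq_integrable measurableT _ _ _
    (integrableMr measurableT mphi_s phi_s_bounded intf)).
  by move=> x _; rewrite /= EFinM.
have intphif : mu.-integrable setT (EFin \o (fun x => phi (u / s) * f x)).
  apply: (eq_integrable measurableT _ _ _ (integrableZl measurableT (phi (u / s)) intf)).
  by move=> x _; rewrite /= EFinM.
have intD : mu.-integrable setT (EFin \o (fun x => H x - phi (u / s) * f x)).
  apply: (eq_integrable measurableT _ _ _ (integrableB measurableT intH intphif)).
  by move=> x _; rewrite /= EFinB.
have -> : \int[mu]_(z in setT) (phi z * f (z * s - u))
    = s^-1 * \int[mu]_(x in setT) H x.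
  rewrite -(Rintegral_affine s u s_gt0 H intH); apply: eq_Rintegral => z _.
  by rewrite /H subrK mulfK ?gt_eqF.
rewrite mulVKf ?gt_eqF // -RintegralZl // -RintegralB //.
apply: le_trans (le_normr_Rintegral measurableT intD) _.
rewrite -RintegralZl //; last exact: integrable_norm.
apply: le_Rintegral => //.
- exact: integrable_norm.
- apply: (eq_integrable measurableT _ _ _
    (integrableZl measurableT (L / s) (integrable_norm intxf))).
  by move=> x _; rewrite /= EFinM.
- move=> x _; rewrite /H -mulrBl [`|x * _|]normrM mulrA normrM.
  apply: ler_wpM2r => //; apply: le_trans (phi_lipschitz _ _) _.
  by rewrite -mulrBl addrK normrM normfV (gtr0_norm s_gt0) mulrA mulrAC.
Qed.
End scaled_integral.

Lemma cvg_invr_sqrt_nat {R : realType} :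
  (fun N : nat => (Num.sqrt (N%:R : R))^-1) @ \oo --> (0 : R).
Proof.
rewrite -cvg_shiftS.
have -> : [sequence (Num.sqrt (n.+1%:R : R))^-1]_n = Num.sqrt \o @harmonic R.
  by apply/funext => n /=; rewrite sqrtrV.
have := @continuous_cvg _ _ _ _ _ (@harmonic R) _ 0 (@sqrt_continuous R 0) cvg_harmonic.
by rewrite sqrtr0; apply; exact: eventually_filter.
Qed.

Lemma cvg_sqrt_mul_add_div_sqrt {R : realType} (eps : nat -> R) (a b : R) :
  (fun N : nat => Num.sqrt N%:R * eps N) @ \oo --> (0 : R) ->
  (fun N : nat => Num.sqrt N%:R * (a * eps N) + b / Num.sqrt N%:R) @ \oo --> (0 : R).
Proof.
move=> eps_cvg; have -> : (0 : R) = a * 0 + b * 0 by rewrite !mulr0 addr0.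
apply: cvgD; first by under eq_fun do rewrite mulrCA; exact: cvgMl_tmp.
by apply: cvgMl_tmp; exact: cvg_invr_sqrt_nat.
Qed.

Theorem proposition5p1
  (d : measure_display) (T : measurableType d) (R : realType)
  (P : probability T R) (X : nat -> {RV P >-> R}) (sigma : R)
  (F : set (R -> R)) (nrm : (R -> R) -> R) (f : R -> R) :
  0 < sigma ->
  (* asymptotic mean A = lim E(S_N / N) = 0 (standing assumption) *)
  (forall n, P.-integrable setT (EFin \o X n)) ->
  (fun N : nat => fine ('E_P[psum X N])%E / N%:R) @ \oo --> (0 : R) ->
  (* F is a linear space of functions on R with a norm *)
  F (fun _ => 0) ->
  (forall g h, F g -> F h -> F (fun x => g x + h x)) ->
  (forall (a : R) g, F g -> F (fun x => a * g x)) ->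
  (forall g, F g -> 0 <= nrm g) ->
  (forall (a : R) g, F g -> nrm (fun x => a * g x) = `|a| * nrm g) ->
  (forall g h, F g -> F h -> nrm (fun x => g x + h x) <= nrm g + nrm h) ->
  (* closed under translations, translation-invariant norm *)
  (forall g (u : R), F g -> F (fun x => g (x - u))) ->
  (forall g (u : R), F g -> nrm (fun x => g (x - u)) = nrm g) ->
  (* E(g(S_N)) is well defined for g in F *)
  (forall g N, F g -> P.-integrable setT (EFin \o (g \o psum X N))) ->
  (* weak global Edgeworth expansion of order 0, P_{0,g} = 1, A = 0 *)
  (exists eps : nat -> R,
     (fun N : nat => Num.sqrt N%:R * eps N) @ \oo --> (0 : R) /\
     forall g N, F g ->
       `| fine ('E_P[g \o psum X N])%E
          - Rintegral lebesgue_measure setT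
              (fun z => ndens sigma z * g (z * Num.sqrt N%:R)) |
       <= nrm g * eps N) ->
  (* f in F, f and x f(x) integrable *)
  F f ->
  measurable_fun setT f ->
  lebesgue_measure.-integrable setT (EFin \o f) ->
  lebesgue_measure.-integrable setT (EFin \o (fun x => x * f x)) ->
  (* conclusion, uniformly in u *)
  exists r : nat -> R,
    r @ \oo --> (0 : R) /\
    forall (N : nat) (u : R),
      `| Num.sqrt N%:R * fine ('E_P[fun t => f (psum X N t - u)%R])%E
         - (Num.sqrt (2 * pi * sigma ^+ 2))^-1
             * expR (- (u ^+ 2) / (2 * N%:R * sigma ^+ 2))
             * Rintegral lebesgue_measure setT f | <= r N.
Proof.
(* The mean-zero assumption is already built into the form of the expansion,
   so only translation invariance, the expansion and the integrability of
   [f] and [x f(x)] are used. *)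
move=> sigma_gt0 _ _ _ _ _ _ _ _ F_shift nrm_shift _ [eps [eps_cvg edgeworth]] Ff _.
move=> intf intxf.
set c := (Num.sqrt (2 * pi * sigma ^+ 2))^-1.
set I := Rintegral lebesgue_measure setT f.
pose K := \int[lebesgue_measure]_(x in setT) `|x * f x|.
pose bound N := Num.sqrt N%:R * (nrm f * eps N) + c / sigma * K / Num.sqrt N%:R.
(* At N = 0 the exponent [- u ^+ 2 / 0] is 0, so the error is [`|c * I|]. *)
exists (fun N => if N is 0 then `|c * I| else bound N); split.
  have := cvg_sqrt_mul_add_div_sqrt _ (nrm f) (c / sigma * K) eps_cvg.
  by rewrite -/bound -cvg_shiftS => bound_cvg; rewrite -cvg_shiftS.
move=> [|n] u.
  by rewrite sqrtr0 !mul0r mulr0 mul0r invr0 mulr0 expR0 mulr1 sub0r normrN.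
set s := Num.sqrt n.+1%:R.
have s_gt0 : 0 < s by rewrite sqrtr_gt0 ltr0n.
have := edgeworth (fun x => f (x - u)) n.+1 (F_shift f u Ff).
rewrite nrm_shift // -/s.
set E := fine _; set J := Rintegral _ _ _ => E_J.
have := scaled_integral_first_moment_bound (measurable_ndens sigma)
  (normr_ndens_le sigma) (ndens_lipschitz sigma sigma_gt0) f s u s_gt0 intf intxf.
rewrite -/J -/I -/K => J_I.
have -> : c * expR (- u ^+ 2 / (2 * n.+1%:R * sigma ^+ 2)) = ndens sigma (u / s).
  rewrite /ndens expr_div_n /s sqr_sqrtr ?ler0n //; congr (_ * expR _).
  by field; rewrite ?gt_eqF ?ltr0n ?exprn_gt0.
rewrite -[s * E](subrK (s * J)) -mulrBr -addrA.
apply: le_trans (ler_normD _ _) _; rewrite normrM gtr0_norm //.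
rewrite /bound -/s [_ * K / s]mulrAC; apply: lerD J_I.
by rewrite ler_pM2l.
Qed.
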